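(* Let $t\geq 1$ be an integer. Let $(V,P)$ be an irreducible, reversible Markov process on a finite set $V$ with stationary distribution $\pi$, and let $\sigma,\nu$ be probability distributions on $V$ with disjoint supports. Then \[\sum_{v\in V}\frac{\nu_v^2}{\pi_v}\leq 2R_{\mathrm{eff}}(P^t;\sigma-\nu).\]
   Context: A Markov process $(V,P)$ has a row-stochastic transition matrix $P$; irreducible means every state can reach every other with positive probability in some number of steps (then the stationary distribution $\pi=\pi P$ is unique with $\pi_v>0$); reversible means $\pi_vP_{vw}=\pi_wP_{wv}$ for all $v,w$ (so $P^t$ is also reversible with respect to $\pi$). For a process $Q$ reversible with respect to $\pi$, associate the undirected graph on $V$ with an edge $\{v,w\}$ whenever $Q_{vw}>0$ and resistance $r_{\{v,w\}}=1/(\pi_vQ_{vw})$, each edge arbitrarily oriented. For $\xi\in\mathbb{R}^V$, $R_{\mathrm{eff}}(Q;\xi)$ is the minimum of the energy $\sum_e r_ef_e^2$ over flows $f:E\to\mathbb{R}$ whose net-flow $\delta_f(v)=\sum_{e\text{ out of }v}f_e-\sum_{e\text{ into }v}f_e$ equals $\xi$ (taken to be $+\infty$ if no such flow exists). *)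

(* V = 'I_n, R : realType. *)
From HB Require Import structures.
From mathcomp Require Import all_boot all_order all_algebra.
From mathcomp Require Import all_classical all_reals all_analysis.
Set Implicit Arguments. Unset Strict Implicit. Unset Printing Implicit Defensive.
Import Order.TTheory GRing.Theory Num.Theory.
Local Open Scope ring_scope.

Section Markov.
Variables (R : realType) (n : nat).

Definition row_stochastic (P : 'M[R]_n) : Prop :=
  (forall v w, 0 <= P v w) /\ (forall v, \sum_w P v w = 1).

Definition irreducible (P : 'M[R]_n) : Prop :=
  forall v w, exists k : nat, 0 < (P ^+ k) v w.

Definition prob_distr (mu : 'I_n -> R) : Prop :=
  (forall v, 0 <= mu v) /\ \sum_v mu v = 1.

Definition stationary (P : 'M[R]_n) (pi : 'I_n -> R) : Prop :=
  prob_distr pi /\ forall w, \sum_v pi v * P v w = pi w.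

Definition reversible (P : 'M[R]_n) (pi : 'I_n -> R) : Prop :=
  forall v w, pi v * P v w = pi w * P w v.

(* Edges of the graph associated to Q: unordered pairs {v,w} with Q v w > 0,
   each oriented from the smaller to the larger index (v <= w). *)
Definition is_edge (Q : 'M[R]_n) (v w : 'I_n) : bool := (v <= w)%N && (0 < Q v w).

Definition resistance (Q : 'M[R]_n) (pi : 'I_n -> R) (v w : 'I_n) : R :=
  (pi v * Q v w)^-1.

(* a flow is a real number on each (oriented) edge; values off edges are ignored *)
Definition energy (Q : 'M[R]_n) (pi : 'I_n -> R) (f : 'I_n -> 'I_n -> R) : R :=
  \sum_v \sum_(w | is_edge Q v w) resistance Q pi v w * f v w ^+ 2.

Definition netflow (Q : 'M[R]_n) (f : 'I_n -> 'I_n -> R) (v : 'I_n) : R :=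
  \sum_(w | is_edge Q v w) f v w - \sum_(u | is_edge Q u v) f u v.

(* minimum energy over flows with net-flow xi; +oo if no such flow *)
Definition Reff (Q : 'M[R]_n) (pi : 'I_n -> R) (xi : 'I_n -> R) : \bar R :=
  ereal_inf [set (energy Q pi f)%:E | f in [set f | forall v, netflow Q f v = xi v]].

End Markov.

From HB Require Import structures.
From mathcomp Require Import all_boot all_order all_algebra.
From mathcomp Require Import all_classical all_reals all_analysis.
From mathcomp Require Import ring lra.
Import Order.TTheory GRing.Theory Num.Theory.
Local Open Scope ring_scope.

(* Put h := nu / pi. As sigma and nu have disjoint supports,
   \sum_v nu_v^2 / pi_v = \sum_v h_v (nu_v - sigma_v), and for a flow f with
   net-flow sigma - nu, summation by parts turns this into
   \sum_(e = vw) f_e (h_w - h_v). By AM-GM each term is at most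
   r_e f_e^2 + (h_v - h_w)^2 / (4 r_e), so the left-hand side A is at most the
   energy of f plus a quarter of the Dirichlet form of h. As P^t is stochastic
   and reversible, (a - b)^2 <= 2 a^2 + 2 b^2 bounds this Dirichlet form by 2 A,
   whence A <= energy f + A / 2. *)

Section MatrixPowers.
Context {R : pzRingType} {n : nat} {P : 'M[R]_n}.

Lemma mxpow0 v w : (P ^+ 0) v w = (v == w)%:R.
Proof. by rewrite expr0 mxE. Qed.

Lemma mxpowSl k v w : (P ^+ k.+1) v w = \sum_u P v u * (P ^+ k) u w.
Proof. by rewrite exprS -mulmxE mxE. Qed.

Lemma mxpowSr k v w : (P ^+ k.+1) v w = \sum_u (P ^+ k) v u * P u w.
Proof. by rewrite exprSr -mulmxE mxE. Qed.

Lemma mxpow_row_sum1 :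
  (forall v, \sum_w P v w = 1) -> forall k v, \sum_w (P ^+ k) v w = 1.
Proof.
move=> P_row; elim => [|k IHk] v.
  rewrite (bigD1 v) //= big1 => [|w /negbTE]; rewrite mxpow0 ?eqxx ?addr0 //.
  by rewrite eq_sym => ->.
under eq_bigr do rewrite mxpowSl.
rewrite exchange_big /= -(P_row v); apply: eq_bigr => u _.
by rewrite -mulr_sumr IHk mulr1.
Qed.

Lemma mxpow_invariant (pi : 'I_n -> R) :
  (forall w, \sum_v pi v * P v w = pi w) ->
  forall k w, \sum_v pi v * (P ^+ k) v w = pi w.
Proof.
move=> pi_inv; elim => [|k IHk] w.
  rewrite (bigD1 w) //= big1 => [|v /negbTE]; rewrite mxpow0 ?eqxx ?mulr1 ?addr0 //.
  by move=> ->; rewrite mulr0.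
under eq_bigr do rewrite mxpowSr mulr_sumr.
rewrite exchange_big /= -pi_inv; apply: eq_bigr => u _.
by rewrite -IHk mulr_suml; apply: eq_bigr => v _; rewrite mulrA.
Qed.

End MatrixPowers.

Lemma mxpow_ge0 {R : numDomainType} {n : nat} {P : 'M[R]_n} :
  (forall v w, 0 <= P v w) -> forall k v w, 0 <= (P ^+ k) v w.
Proof.
move=> P_ge0; elim => [|k IHk] v w; first by rewrite mxpow0 ler0n.
by rewrite mxpowSl; apply: sumr_ge0 => u _; rewrite mulr_ge0.
Qed.

Lemma sum_symmetric_upper {V : zmodType} {m : nat} {g : 'I_m -> 'I_m -> V} :
  (forall v w, g v w = g w v) -> (forall v, g v v = 0) ->
  \sum_(v < m) \sum_(w < m) g v w = (\sum_(v < m) \sum_(w < m | (v <= w)%N) g v w) *+ 2.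
Proof.
move=> gC g0.
have lower : \sum_(v < m) \sum_(w < m | (w < v)%N) g v w =
             \sum_(v < m) \sum_(w < m | (v <= w)%N) g v w.
  under eq_bigr do rewrite big_mkcond.
  rewrite exchange_big /=; apply: eq_bigr => v _; rewrite [RHS]big_mkcond /=.
  apply: eq_bigr => w _; case: ltngtP => [_|//|/val_inj->]; [exact: gC | by rewrite g0].
rewrite mulr2n -{2}lower -big_split /=; apply: eq_bigr => v _.
rewrite [LHS](bigID (fun w : 'I_m => (v <= w)%N)) /=.
by under [X in _ + X = _]eq_bigl do rewrite -ltnNge.
Qed.

Lemma mul_le_inv_sqr_add (R : realFieldType) (c F x : R) :
  0 < c -> F * x <= c^-1 * F ^+ 2 + c * x ^+ 2 / 4.
Proof.
move=> c_gt0; rewrite -subr_ge0.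
have -> : c^-1 * F ^+ 2 + c * x ^+ 2 / 4 - F * x = c^-1 * (F - c * x / 2) ^+ 2.
  by field; rewrite gt_eqF.
by rewrite mulr_ge0 ?sqr_ge0 // invr_ge0 ltW.
Qed.

Section Flows.
Context {R : realType} {n : nat}.
Implicit Types (Q : 'M[R]_n) (pi phi : 'I_n -> R) (f : 'I_n -> 'I_n -> R).

Lemma reversible_mxpow Q pi k : reversible Q pi -> reversible (Q ^+ k) pi.
Proof.
move=> Qrev; elim: k => [|k IHk] v w.
  by rewrite !mxpow0 eq_sym; case: eqP => [->|_]; rewrite ?mulr0.
rewrite mxpowSr mxpowSl !mulr_sumr; apply: eq_bigr => u _.
by rewrite mulrA IHk mulrAC Qrev -mulrA.
Qed.

Lemma irreducible_stationary_gt0 Q pi :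
  (forall v w, 0 <= Q v w) -> irreducible Q -> stationary Q pi -> forall v, 0 < pi v.
Proof.
move=> Q_ge0 Q_irr [[pi_ge0 pi_sum1] pi_inv] v.
have [u /andP[_ pi_u]] : exists u, true && (0 < pi u).
  apply: psumr_neq0P => [u _|]; first exact: pi_ge0.
  by rewrite pi_sum1; apply/eqP; rewrite oner_neq0.
have [k Qk] := Q_irr u v.
rewrite -(mxpow_invariant _ pi_inv k v) (bigD1 u) //=.
apply: lt_le_trans (mulr_gt0 pi_u Qk) _; rewrite lerDl.
by apply: sumr_ge0 => w _; rewrite mulr_ge0 // mxpow_ge0.
Qed.

Lemma sum_mul_netflow Q f phi :
  \sum_v phi v * netflow Q f v =
  \sum_v \sum_(w | is_edge Q v w) f v w * (phi v - phi w).
Proof.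
rewrite /netflow.
under eq_bigr do rewrite mulrBr !mulr_sumr.
under [RHS]eq_bigr do under eq_bigr do rewrite mulrBr.
under [RHS]eq_bigr do rewrite sumrB.
rewrite !sumrB; congr (_ - _).
  by apply: eq_bigr => v _; apply: eq_bigr => w _; rewrite mulrC.
under eq_bigr do rewrite big_mkcond /=.
under [RHS]eq_bigr do rewrite big_mkcond /=.
rewrite exchange_big /=; apply: eq_bigr => v _; apply: eq_bigr => w _.
by case: ifP => _ //; rewrite mulrC.
Qed.

Definition dirichlet_form Q pi phi :=
  \sum_v \sum_(w | is_edge Q v w) pi v * Q v w * (phi v - phi w) ^+ 2.

Lemma sum_mul_netflow_le Q pi f phi : (forall v, 0 < pi v) ->
  \sum_v phi v * netflow Q f v <= energy Q pi f + dirichlet_form Q pi phi / 4.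
Proof.
move=> pi_gt0; rewrite sum_mul_netflow mulr_suml -big_split /=.
apply: ler_sum => v _; rewrite mulr_suml -big_split /=.
apply: ler_sum => w /andP[_ Q_gt0].
by apply: mul_le_inv_sqr_add; rewrite mulr_gt0.
Qed.

Section Reversible.
Variables (Q : 'M[R]_n) (pi : 'I_n -> R).
Hypotheses (pi_ge0 : forall v, 0 <= pi v) (Q_ge0 : forall v w, 0 <= Q v w)
  (Q_row : forall v, \sum_w Q v w = 1) (Qrev : reversible Q pi).

Lemma sum_sqr_diff_le phi :
  \sum_v \sum_w pi v * Q v w * (phi v - phi w) ^+ 2 <= 4 * \sum_v pi v * phi v ^+ 2.
Proof.
pose x v w := pi v * Q v w * phi v ^+ 2.
have sum_x : \sum_v \sum_w x v w = \sum_v pi v * phi v ^+ 2.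
  by apply: eq_bigr => v _; rewrite -mulr_suml -mulr_sumr Q_row mulr1.
apply: (@le_trans _ _ (\sum_v \sum_w (2 * x v w + 2 * x w v))).
  apply: ler_sum => v _; apply: ler_sum => w _.
  have -> : 2 * x v w + 2 * x w v = pi v * Q v w * (2 * phi v ^+ 2 + 2 * phi w ^+ 2).
    by rewrite /x -Qrev; ring.
  rewrite ler_wpM2l ?mulr_ge0 // -subr_ge0.
  have -> : 2 * phi v ^+ 2 + 2 * phi w ^+ 2 - (phi v - phi w) ^+ 2 = (phi v + phi w) ^+ 2.
    by ring.
  exact: sqr_ge0.
under eq_bigr do rewrite big_split /= -!mulr_sumr.
rewrite big_split /= -!mulr_sumr [X in _ + 2 * X]exchange_big /= sum_x; lra.
Qed.

Lemma dirichlet_form_le phi :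
  dirichlet_form Q pi phi <= 2 * \sum_v pi v * phi v ^+ 2.
Proof.
pose g v w := pi v * Q v w * (phi v - phi w) ^+ 2.
have g_ge0 v w : 0 <= g v w by rewrite /g /= mulr_ge0 ?sqr_ge0 ?mulr_ge0 ?pi_ge0 ?Q_ge0.
have gC v w : g v w = g w v by rewrite /g Qrev -sqrrN opprB.
have g0 v : g v v = 0 by rewrite /g subrr expr0n mulr0.
have edges_le : dirichlet_form Q pi phi <= \sum_(v < n) \sum_(w < n | (v <= w)%N) g v w.
  apply: ler_sum => v _; rewrite /is_edge big_mkcondr /=.
  by apply: ler_sum => w _; case: ifP => _; [exact: lexx | exact: g_ge0].
have := sum_sqr_diff_le phi.
rewrite (sum_symmetric_upper gC g0) mulr2n; lra.
Qed.

End Reversible.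

Lemma sum_sqr_div_le_energy Q pi (sigma nu : 'I_n -> R) f :
  (forall v, 0 < pi v) -> (forall v w, 0 <= Q v w) -> (forall v, \sum_w Q v w = 1) ->
  reversible Q pi -> (forall v, sigma v = 0 \/ nu v = 0) ->
  (forall v, netflow Q f v = sigma v - nu v) ->
  \sum_v nu v ^+ 2 / pi v <= 2 * energy Q pi f.
Proof.
move=> pi_gt0 Q_ge0 Q_row Qrev disj f_flow.
pose h v := - (nu v / pi v).
have pi_neq0 v : pi v != 0 by rewrite gt_eqF.
have normE : \sum_v nu v ^+ 2 / pi v = \sum_v pi v * h v ^+ 2.
  by apply: eq_bigr => v _; rewrite /h sqrrN; field.
have pairingE : \sum_v nu v ^+ 2 / pi v = \sum_v h v * netflow Q f v.
  by apply: eq_bigr => v _; rewrite f_flow /h; case: (disj v) => ->; field.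
have := sum_mul_netflow_le Q pi f h pi_gt0.
have := dirichlet_form_le Q pi (fun v => ltW (pi_gt0 v)) Q_ge0 Q_row Qrev h.
rewrite -normE -pairingE; lra.
Qed.

End Flows.

Theorem lemma3p3 (R : realType) (n : nat) (t : nat) (P : 'M[R]_n)
  (pi sigma nu : 'I_n -> R) :
  (1 <= t)%N ->
  row_stochastic P -> irreducible P -> stationary P pi -> reversible P pi ->
  prob_distr sigma -> prob_distr nu ->
  (forall v, sigma v = 0 \/ nu v = 0) ->
  ((\sum_v nu v ^+ 2 / pi v)%:E <= 2%:E * Reff (P ^+ t) pi (fun v => (sigma v - nu v)%R))%E.
Proof.
move=> _ [P_ge0 P_row] P_irr P_stat P_rev _ _ disj.
have pi_gt0 := irreducible_stationary_gt0 P pi P_ge0 P_irr P_stat.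
rewrite /Reff -ereal_inf_pZl //; apply: le_ereal_inf_tmp => _ [_ [f f_flow <-] <-].
rewrite -EFinM lee_fin; apply: sum_sqr_div_le_energy pi_gt0 _ _ _ disj f_flow.
- exact: mxpow_ge0.
- exact: mxpow_row_sum1.
- exact: reversible_mxpow.
Qed.
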